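(* Let $X,Y\subseteq\mathbb{Q}$ be such that $X\setminus Y$ and $Y\setminus X$ are finite. Then $X$ is a base if and only if $Y$ is a base.
   Context: For $X\subseteq\mathbb{Q}$ and a positive integer $N$, write $X_N:=\{x_1+\cdots+x_N : x_1,\dots,x_N\in X\}$. $X$ is called a base if $X_N=\mathbb{Q}$ for some $N\ge 1$. *)

From HB Require Import structures.
From mathcomp Require Import all_boot all_order all_algebra.
Set Implicit Arguments. Unset Strict Implicit. Unset Printing Implicit Defensive.
Import Order.TTheory GRing.Theory Num.Theory.
Local Open Scope ring_scope.

Definition ratset := rat -> Prop.

Definition sumset (X : ratset) (N : nat) : ratset :=
  fun q => exists x : 'I_N -> rat, (forall i, X (x i)) /\ q = \sum_(i < N) x i.

Definition is_base (X : ratset) : Prop :=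
  exists N : nat, (1 <= N)%N /\ forall q : rat, sumset X N q.

Definition setdiff (X Y : ratset) : ratset := fun q => X q /\ ~ Y q.

Definition finite_set (A : ratset) : Prop :=
  exists s : seq rat, forall q, A q -> q \in s.

From HB Require Import structures.
From mathcomp Require Import all_boot all_order all_algebra.
From mathcomp Require Import zify ring.
From Stdlib Require Import Classical.
Set Implicit Arguments. Unset Strict Implicit. Unset Printing Implicit Defensive.
Import Order.TTheory GRing.Theory Num.Theory.
Local Open Scope ring_scope.

(* It suffices to remove one point [a] from a base [S :|: {a}].  Splitting the
   representations of [- a] (as [- (k + 1) a] plus a sum from [S]) and of
   [a / (k + 1) + N a] produces [a] as a sum of elements of [S], so every
   rational is a sum of boundedly many elements of [S].  Bounded
   representations give a base: [0 = 1 + (-1)] is a nonempty sum of length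
   [L], and representing [q / L] and multiplying by [L] makes all lengths
   multiples of [L], which are then equalised by padding with zero sums.
   Adding points to a base trivially keeps it a base. *)

Section Sumsets.
Variable S : ratset.

Lemma sumset0 : sumset S 0 0.
Proof. by exists (fun _ => 0); split; [case | rewrite big_ord0]. Qed.

Lemma sumset0_eq q : sumset S 0 q -> q = 0.
Proof. by move=> [x [_ ->]]; rewrite big_ord0. Qed.

Lemma sumset1 s : S s -> sumset S 1 s.
Proof. by move=> Ss; exists (fun _ => s); split => //; rewrite big_ord1. Qed.

Lemma sumsetD m n u v :
  sumset S m u -> sumset S n v -> sumset S (m + n) (u + v).
Proof.
move=> [x [Sx ->]] [y [Sy ->]].
exists (fun k => match split k with inl i => x i | inr j => y j end); split.
  by move=> k; case: (split k).
rewrite big_split_ord /=; congr (_ + _); apply: eq_bigr => k _.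
  by rewrite (unsplitK (inl k)).
by rewrite (unsplitK (inr k)).
Qed.

Lemma sumsetMn k n u : sumset S n u -> sumset S (k * n) (k%:R * u).
Proof.
move=> Su; elim: k => [|k IHk]; first by rewrite mul0n mul0r; exact: sumset0.
by rewrite mulSn -addn1 natrD mulrDl mul1r addrC; exact: sumsetD.
Qed.

Lemma sumsetS n r : sumset S n.+1 r -> exists2 x, S x & sumset S n (r - x).
Proof.
move=> [x [Sx ->]]; exists (x ord0) => //.
rewrite big_ord_recl addrC addKr.
by exists (fun i => x (lift ord0 i)).
Qed.

Lemma sumset_len_gt0 n q : q != 0 -> sumset S n q -> (0 < n)%N.
Proof. by case: n => // q_neq0 /sumset0_eq q0; rewrite q0 eqxx in q_neq0. Qed.

Lemma sumset_eq n m q q' : n = m -> q = q' -> sumset S n q -> sumset S m q'.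
Proof. by move=> -> ->. Qed.

Definition bounded_sums (M : nat) : Prop :=
  forall q : rat, exists2 n, (n <= M)%N & sumset S n q.

Lemma bounded_sums_zero M : bounded_sums M -> exists2 L, (0 < L)%N & sumset S L 0.
Proof.
move=> bdd; have [n1 _ S1] := bdd 1; have [n2 _ S2] := bdd (-1).
exists (n1 + n2)%N; last by rewrite -(subrr 1); exact: sumsetD.
by rewrite addn_gt0 (sumset_len_gt0 (oner_neq0 _) S1).
Qed.

Lemma bounded_sums_base M : bounded_sums M -> is_base S.
Proof.
move=> bdd; have [L L_gt0 S0] := bounded_sums_zero bdd.
have [n1 n1M S1] := bdd 1.
have M_gt0 : (0 < M)%N by apply: leq_trans n1M; exact: sumset_len_gt0 S1.
exists (L * M)%N; split; first by rewrite muln_gt0 L_gt0.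
move=> q; have [n nM Sq] := bdd (q / L%:R).
have L_neq0 : L%:R != 0 :> rat by rewrite pnatr_eq0 -lt0n.
apply: sumset_eq (sumsetD (sumsetMn L Sq) (sumsetMn (M - n) S0)).
  by rewrite [(L * n)%N]mulnC -mulnDl subnKC // mulnC.
by rewrite mulr0 addr0 mulrC divfK.
Qed.

End Sumsets.

Lemma sumset_mono (X Z : ratset) n q :
  (forall x, X x -> Z x) -> sumset X n q -> sumset Z n q.
Proof. by move=> XZ [x [Xx ->]]; exists x; split => // i; apply: XZ. Qed.

Section InsertPoint.
Variables (S : ratset) (a : rat).
Let Sa : ratset := fun x => S x \/ x = a.

Lemma sumset_insert n r :
  sumset Sa n r -> exists2 k, (k <= n)%N & sumset S (n - k) (r - k%:R * a).
Proof.
elim: n r => [|n IHn] r Sr.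
  exists 0%N => //; rewrite (sumset0_eq Sr) mul0r subr0; exact: sumset0.
have [x [Sx|->] Srx] := sumsetS Sr; have [k kn Sk] := IHn _ Srx.
  exists k; first exact: leqW.
  by apply: sumset_eq (sumsetD (sumset1 Sx) Sk); [lia | ring].
exists k.+1 => //; apply: sumset_eq Sk; first by lia.
by rewrite -addn1 natrD; ring.
Qed.

Lemma insert_base_point : is_base Sa -> exists alpha, sumset S alpha a.
Proof.
move=> [N [_ baseN]].
have [k1 _ S1] := sumset_insert (baseN (- a)).
have k1S_neq0 : k1.+1%:R != 0 :> rat by rewrite pnatr_eq0.
have [k kN S2] := sumset_insert (baseN (a / k1.+1%:R + N%:R * a)).
(* [(k1 + 1) (a / (k1 + 1) + (N - k) a) + (N - k) (- (k1 + 1) a) = a] *)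
exists (k1.+1 * (N - k) + (N - k) * (N - k1))%N.
apply: sumset_eq (sumsetD (sumsetMn k1.+1 S2) (sumsetMn (N - k) S1)) => //.
by rewrite natrB // -addn1 natrD in k1S_neq0 *; field.
Qed.

Lemma sumset_insert_absorb alpha n q :
  sumset S alpha a -> sumset Sa n q ->
  exists2 m, (m <= n * alpha.+1)%N & sumset S m q.
Proof.
move=> S_a /sumset_insert [k kn Sk].
exists (n - k + k * alpha)%N.
  by rewrite mulnS leq_add ?leq_subr ?leq_mul2r ?kn ?orbT.
by apply: sumset_eq (sumsetD Sk (sumsetMn k S_a)) => //; rewrite subrK.
Qed.

Lemma insert_base : is_base Sa -> is_base S.
Proof.
move=> baseSa; have [alpha S_a] := insert_base_point baseSa.
have [N [_ baseN]] := baseSa.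
apply: (@bounded_sums_base _ (N * alpha.+1)) => q.
exact: sumset_insert_absorb S_a (baseN q).
Qed.

End InsertPoint.

Lemma base_mono (X Z : ratset) :
  (forall x, X x -> Z x) -> is_base X -> is_base Z.
Proof. by move=> XZ [N [N_gt0 baseN]]; exists N; split => // q; apply: sumset_mono XZ _. Qed.

Lemma base_finite_change (s : seq rat) (X Y : ratset) :
  (forall x, X x -> ~ Y x -> x \in s) -> is_base X -> is_base Y.
Proof.
elim: s X => [|a s IHs] X XYs baseX.
  by apply: base_mono baseX => x Xx; apply: NNPP => /(XYs x Xx).
pose Z : ratset := fun x => Y x \/ x \in s.
apply: (IHs Z) => [x [//|xs] //|]; apply: insert_base.
apply: base_mono baseX => x Xx; case: (classic (Y x)) => [Yx | nYx].
  by left; left.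
by move: (XYs x Xx nYx); rewrite in_cons => /orP [/eqP ->|xs]; [right | left; right].
Qed.

Theorem proposition2p6 (X Y : ratset) :
  finite_set (setdiff X Y) -> finite_set (setdiff Y X) ->
  (is_base X <-> is_base Y).
Proof.
move=> [s XYs] [t YXt]; split; apply: base_finite_change.
  by move=> x Xx nYx; apply: XYs.
by move=> x Yx nXx; apply: YXt.
Qed.
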